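(* Let $n$ be even, let $d\ge3$ be odd, and let $r$ be a positive integer with $r(r-1)<n$. Fix a coordinate direction $k\in\{1,\dots,d-1\}$ and $r$ consecutive values $j,j+1,\dots,j+r-1$ of that coordinate. Let $P\in\Lambda_1(d,n)$ be such that the Latin hypercube $\mathcal H(P)$ agrees with $C_{d-1,n}$ at every cell whose $k$-th coordinate is not among $j,\dots,j+r-1$ (i.e. it agrees with $C_{d-1,n}$ outside these $r$ consecutive hyperplanes). Then $\operatorname{Per}(P)=0$. Furthermore, if $P_1,\dots,P_m\in\Lambda_1(d,n)$ all have this property (for the same fixed $r$ hyperplanes), then every linear combination $a_1P_1+\cdots+a_mP_m$ has permanent $0$.
   Context: Let $I_n=\{1,\dots,n\}$. A $d$-dimensional matrix of order $n$ is a function $I_n^d\to\mathbb R$. A diagonal is a selection of $n$ positions of $I_n^d$ any two of which differ in every coordinate; the permanent $\operatorname{Per}(A)$ is the sum over all diagonals of the product of the entries of $A$ at those positions. A line is the set of positions obtained by varying one coordinate and fixing the others. $\Lambda_1(d,n)$ is the set of $(0,1)$-valued $d$-dimensional matrices of order $n$ with exactly one $1$ in each line. A Latin hypercube of dimension $m$ and order $n$ is a function $H:I_n^m\to I_n$ in which every line contains each symbol exactly once. For $P\in\Lambda_1(d,n)$, $\mathcal H(P)$ is the Latin hypercube of dimension $d-1$ with $\mathcal H(P)(i_1,\dots,i_{d-1})=i_d$ iff $P(i_1,\dots,i_d)=1$. The cyclic Latin hypercube $C_{m,n}$ is defined by $C_{m,n}(x_1,\dots,x_m)\equiv x_1+\cdots+x_m\pmod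 n$, with value taken in $I_n$. A hyperplane of $\mathcal H(P)$ is the set of cells with one coordinate fixed. *)

From HB Require Import structures.
From mathcomp Require Import all_boot all_order all_algebra.
From mathcomp Require Import reals.
Set Implicit Arguments. Unset Strict Implicit. Unset Printing Implicit Defensive.
Import Order.TTheory GRing.Theory Num.Theory.
Local Open Scope ring_scope.

(* Conventions: coordinates are indexed 0..d-1 (paper: 1..d) and values
   are in 'I_n = {0..n-1} (paper: I_n = {1..n}); value v here is v+1 in the paper. *)

Definition pos (d n : nat) := {ffun 'I_d -> 'I_n}.

Definition mat (R : Type) (d n : nat) := pos d n -> R.

Definition is_diagonal (d n : nat) (D : {set pos d n}) : bool :=
  (#|D| == n) &&
  [forall x in D, forall y in D, (x != y) ==> [forall i, x i != y i]].

Definition Per (R : realType) (d n : nat) (A : mat R d n) : R :=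
  \sum_(D : {set pos d n} | is_diagonal D) \prod_(x in D) A x.

Definition line (d n : nat) (i : 'I_d) (x : pos d n) : {set pos d n} :=
  [set y : pos d n | [forall l, (l != i) ==> (y l == x l)]].

Definition Lambda1 (R : realType) (d n : nat) (A : mat R d n) : Prop :=
  (forall x, A x = 0 \/ A x = 1) /\
  (forall (i : 'I_d) (x : pos d n), #|[set y in line i x | A y == 1]| = 1%N).

Definition cell (d n : nat) := {ffun 'I_d.-1 -> 'I_n}.

(* the position (c_1, ..., c_{d-1}, v) *)
Definition extend (d n : nat) (c : cell d n) (v : 'I_n) : pos d n :=
  [ffun i : 'I_d => match insub (val i) : option 'I_d.-1 with
                    | Some i' => c i'
                    | None => v end].

(* H(P)(c) = the v with P(c, v) = 1 (well defined for P in Lambda1) *)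
Definition HP (R : realType) (d n : nat) (P : mat R d n) (c : cell d n) : option 'I_n :=
  [pick v : 'I_n | P (extend c v) == 1].

(* cyclic Latin hypercube C_{d-1,n}: 1-based value = sum of 1-based coords mod n,
   in 0-based terms ((sum_i (c_i + 1)) + n - 1) mod n. *)
Definition Ccyc (d n : nat) (c : cell d n) : nat :=
  ((\sum_(i < d.-1) (c i).+1) + n - 1) %% n.

Definition agrees_outside (R : realType) (d n : nat) (k : 'I_d.-1) (j r : nat)
    (P : mat R d n) : Prop :=
  forall c : cell d n, ~~ ((j <= c k) && (c k < j + r))%N ->
    omap val (HP P c) = Some (Ccyc c).

From HB Require Import structures.
From mathcomp Require Import all_boot all_order all_algebra.
From mathcomp Require Import reals.
From mathcomp Require Import zify.
Set Implicit Arguments. Unset Strict Implicit. Unset Printing Implicit Defensive.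
Import Order.TTheory GRing.Theory Num.Theory.
Local Open Scope ring_scope.

(* A position of P is a cell of H(P) followed by a value, and it lies on C_{d-1,n}
   iff the value is congruent to the sum of the cell coordinates plus d - 2 modulo n
   (0-based). Outside the r hyperplanes every 1 of P lies on C_{d-1,n}; a 1 inside
   them can be moved along its k-line onto C_{d-1,n}, and its new k-coordinate stays
   inside the window, for otherwise P would have a second 1 on that line. Summing
   these congruences over a diagonal in the support of P, along which every
   coordinate takes each value once, shows that the total displacement W of the
   k-coordinates is congruent to n/2 modulo n, because n and d - 1 are even; but r
   values moved within a window of width r give |W| <= r(r-1)/2 < n/2. Hence every
   diagonal meets a zero of P, and likewise of any linear combination of such P_i,
   whose support lies in the union of their supports. *)

Lemma modnD_complement n o a : (a < n)%N -> ((o + (a + n - o %% n) %% n) %% n = a)%N.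
Proof.
move=> a_lt; have n_gt0 : (0 < n)%N by apply: leq_ltn_trans a_lt.
have o_mod_lt := ltn_pmod o n_gt0.
rewrite modnDmr (_ : o + _ = (o %/ n).+1 * n + a)%N; first by rewrite modnMDl modn_small.
by rewrite mulSn {1}(divn_eq o n); lia.
Qed.

Lemma Posz_sum (I : finType) (P : pred I) (F : I -> nat) :
  (\sum_(i | P i) F i)%N%:Z = \sum_(i | P i) (F i)%:Z.
Proof. by rewrite (big_morph Posz PoszD erefl). Qed.

Lemma big_ord_window (T : Type) (idx : T) (op : Monoid.law idx) (n j r : nat)
    (F : nat -> T) :
  (j + r <= n)%N ->
  \big[op/idx]_(y < n | (j <= y < j + r)%N) F y = \big[op/idx]_(j <= y < j + r) F y.
Proof.
move=> jr_le; rewrite (big_nat_widen _ _ _ _ _ jr_le) big_geq_mkord.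
by apply: eq_bigl => y /=; rewrite andbC.
Qed.

Lemma sum_window_id j r : (\sum_(j <= y < j + r) y = r * j + 'C(r, 2))%N.
Proof.
rewrite -{1}[j]add0n big_addn addKn big_split /= bin2_sum sum_nat_const_nat subn0.
by rewrite addnC.
Qed.

Lemma bin2_mul2 r : ('C(r, 2) * 2 = r * (r - 1))%N.
Proof.
rewrite bin2 -divn2 divnK ?subn1 // dvdn2 oddM.
by case: r => //= r; rewrite andNb.
Qed.

(* For even n = 2m and p, (1 - p) 'C(n, 2) = m modulo n, so W is an odd multiple of m. *)
Lemma bin2_residue_bound n p (W : int) : ~~ odd n -> ~~ odd p ->
  (n%:Z %| (1 - p%:Z) * ('C(n, 2))%:Z - W)%Z -> (n <= (absz W).*2)%N.
Proof.
move=> /negbTE n_even /negbTE p_even.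
rewrite -[n]odd_double_half -[p]odd_double_half n_even p_even !add0n.
case: n./2 => [//|m] /dvdzP[q Wq]; set e := p./2.
have bin2E : 'C(m.+1.*2, 2) = (m.+1 * m.*2.+1)%N by rewrite bin2 -doubleMl doubleK.
rewrite bin2E in Wq.
have WE : W = m.+1%:Z * ((1 - (e.*2)%:Z) * (m.*2.+1)%:Z - 2 * q) by lia.
have odd_neq0 : (1 - (e.*2)%:Z) * (m.*2.+1)%:Z - 2 * q != 0 by lia.
by rewrite WE abszM leq_double leq_pmulr // absz_gt0.
Qed.

Lemma Per_eq0_of_support (R : realType) d n (A : mat R d n) (S : pos d n -> Prop) :
  (forall x, A x != 0 -> S x) ->
  (forall D, is_diagonal D -> ~ (forall x, x \in D -> S x)) ->
  Per A = 0.
Proof.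
move=> suppS noD; apply: big1 => D /noD DnS.
have [/exists_inP[x xD /eqP Ax0] | /exists_inPn nz] := boolP [exists x in D, A x == 0].
  by rewrite (bigD1 x) //= Ax0 mul0r.
by case: DnS => x /nz Ax; apply: suppS.
Qed.

Section Diagonal.
Variables (d n : nat) (D : {set pos d n}).
Hypothesis diagD : is_diagonal D.

Lemma diag_big_coord (T : Type) (idx : T) {op : Monoid.com_law idx} (i : 'I_d)
    (F : 'I_n -> T) :
  \big[op/idx]_(x in D) F (x i) = \big[op/idx]_y F y.
Proof.
have /andP[/eqP cardD /forall_inP distinct] := diagD.
have inj_coord : {in D &, injective (fun x : pos d n => x i)}.
  move=> x y xD yD xy_i; apply/eqP/negPn/negP.
  move=> /(implyP (forall_inP (distinct x xD) y yD)) /forallP/(_ i).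
  by rewrite xy_i eqxx.
rewrite -(big_imset _ inj_coord); apply: eq_bigl => y.
suff -> : [set x i | x : pos d n in D] = setT by rewrite inE.
by apply/eqP; rewrite eqEcard subsetT cardsT card_ord card_in_imset // cardD leqnn.
Qed.

Lemma diag_big_coord_cond (T : Type) (idx : T) {op : Monoid.com_law idx} (i : 'I_d)
    (P : pred 'I_n) (F : 'I_n -> T) :
  \big[op/idx]_(x in D | P (x i)) F (x i) = \big[op/idx]_(y | P y) F y.
Proof.
by rewrite big_mkcondr (diag_big_coord _ (fun y => if P y then F y else idx)) -big_mkcond.
Qed.

End Diagonal.

Lemma line_refl d n (i : 'I_d) (x : pos d n) : x \in line i x.
Proof. by rewrite inE; apply/forallP => l; apply/implyP. Qed.

Lemma Lambda1_line_uniq (R : realType) d n (P : mat R d n) (i : 'I_d) (x y : pos d n) :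
  Lambda1 P -> y \in line i x -> P x = 1 -> P y = 1 -> y = x.
Proof.
case=> _ /(_ i x) /eqP/cards1P[z line1] yx Px Py.
have mem1 u : u \in line i x -> P u = 1 -> u = z.
  by move=> ux Pu; apply/set1P; rewrite -line1 inE ux Pu eqxx.
by rewrite (mem1 y) // (mem1 x) // line_refl.
Qed.

Section Positions.
Variables p n : nat.
Implicit Types (x : pos p.+1 n) (c : 'I_n).

Definition cellof x : cell p.+1 n := [ffun i => x (lift ord_max i)].

Definition csum x : nat := \sum_(i < p) x (lift ord_max i).

Definition cyclic_pos x : bool := (x ord_max : nat) == Ccyc (cellof x).

Lemma extend_lift (e : cell p.+1 n) v i : extend e v (lift ord_max i) = e i.
Proof.
rewrite ffunE; case: insubP => [i' _ i'E | ] /=.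
  by congr (e _); apply: val_inj; rewrite i'E; exact: lift_max.
by rewrite -[bump p i]/(lift ord_max i : nat) lift_max ltn_ord.
Qed.

Lemma extend_max (e : cell p.+1 n) v : extend e v ord_max = v.
Proof. by rewrite ffunE insubN //= ltnn. Qed.

Lemma extend_cellof x : extend (cellof x) (x ord_max) = x.
Proof.
apply/ffunP => l; case: (unliftP ord_max l) => [i|] ->.
  by rewrite extend_lift ffunE.
by rewrite extend_max.
Qed.

Lemma extend_cellof_line x v : extend (cellof x) v \in line ord_max x.
Proof.
rewrite inE; apply/forallP => l; apply/implyP.
case: (unliftP ord_max l) => [i|] ->; last by rewrite eqxx.
by rewrite (extend_lift (cellof x)) ffunE.
Qed.

Lemma Ccyc_cellof x : Ccyc (cellof x) = ((csum x + p + n - 1) %% n)%N.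
Proof.
rewrite /Ccyc /csum; congr ((_ + n - 1) %% n)%N.
under eq_bigr do rewrite ffunE -addn1.
by rewrite big_split /= sum1_card card_ord.
Qed.

Lemma cyclic_pos_mod x :
  cyclic_pos x -> (n%:Z %| (x ord_max)%:Z - (csum x)%:Z - p%:Z + 1)%Z.
Proof.
have n_gt0 : (0 < n)%N by apply: leq_ltn_trans (ltn_ord (x ord_max)).
rewrite /cyclic_pos Ccyc_cellof => /eqP ->.
set s := (csum x + p + n - 1)%N.
have sE := divn_eq s n.
apply/dvdzP; exists (1 - (s %/ n)%N%:Z).
lia.
Qed.

Variable k : 'I_p.

Definition setk x c : pos p.+1 n := [ffun l => if l == lift ord_max k then c else x l].

Lemma setk_k x c : setk x c (lift ord_max k) = c.
Proof. by rewrite ffunE eqxx. Qed.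

Lemma setk_other x c l : l != lift ord_max k -> setk x c l = x l.
Proof. by rewrite ffunE => /negbTE ->. Qed.

Lemma setk_id x : setk x (x (lift ord_max k)) = x.
Proof. by apply/ffunP => l; rewrite ffunE; case: eqP => [->|]. Qed.

Lemma setk_line x c : setk x c \in line (lift ord_max k) x.
Proof. by rewrite inE; apply/forallP => l; apply/implyP => /setk_other ->. Qed.

Lemma csum_setk x c : (csum (setk x c) + x (lift ord_max k) = csum x + c)%N.
Proof.
rewrite /csum (bigD1 k) // [in RHS](bigD1 k) //= setk_k.
rewrite (eq_bigr (fun i : 'I_p => (x (lift ord_max i) : nat))) => [|i ik]; first lia.
by rewrite setk_other // (inj_eq lift_inj).
Qed.

Lemma exists_cyclic_setk x : exists c, cyclic_pos (setk x c).
Proof.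
have n_gt0 : (0 < n)%N by apply: leq_ltn_trans (ltn_ord (x ord_max)).
(* On the k-line of x, Ccyc takes the value (o + c) %% n at k-coordinate c. *)
set o := (csum x - x (lift ord_max k) + p + n - 1)%N.
have c_lt : ((x ord_max + n - o %% n) %% n < n)%N by rewrite ltn_mod.
exists (Ordinal c_lt).
rewrite /cyclic_pos Ccyc_cellof setk_other; last exact: neq_lift.
rewrite eq_sym -[X in _ == X](modnD_complement o (ltn_ord (x ord_max))).
apply/eqP; congr (_ %% n)%N.
have xk_le : (x (lift ord_max k) <= csum x)%N by rewrite /csum (bigD1 k) //= leq_addr.
have := csum_setk x (Ordinal c_lt); rewrite /o /=; lia.
Qed.

Lemma cyclic_setk_mod x c :
  cyclic_pos (setk x c) ->
  (n%:Z %| (x ord_max)%:Z - (csum x)%:Z - (c%:Z - (x (lift ord_max k))%:Z) - p%:Z + 1)%Z.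
Proof.
move=> /cyclic_pos_mod; rewrite setk_other ?neq_lift //.
have := csum_setk x c => sumE /dvdzP[q qE]; apply/dvdzP; exists q; lia.
Qed.

Variables j r : nat.

Definition cyclic_shift x c : bool :=
  cyclic_pos (setk x c) &&
  if (j <= x (lift ord_max k) < j + r)%N then (j <= c < j + r)%N
  else c == x (lift ord_max k).

End Positions.

Section Support.
Variables (R : realType) (p n : nat) (k : 'I_p) (j r : nat) (P : mat R p.+1 n).
Hypotheses (P_Lambda1 : Lambda1 P) (P_agrees : @agrees_outside R p.+1 n k j r P).
Implicit Types (x y : pos p.+1 n).

Lemma HP_cellof x : P x = 1 -> HP P (cellof x) = Some (x ord_max).
Proof.
rewrite /HP => Px; case: pickP => [v /eqP Pv | /(_ (x ord_max))].
  by rewrite -[v](extend_max (cellof x)) (Lambda1_line_uniq P_Lambda1 (extend_cellof_line x v)).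
by rewrite extend_cellof Px eqxx.
Qed.

Lemma support_outside_cyclic x :
  P x = 1 -> ~~ (j <= x (lift ord_max k) < j + r)%N -> cyclic_pos x.
Proof.
move=> Px xout; have := P_agrees (c := cellof x); rewrite ffunE HP_cellof //.
by move=> /(_ xout) [/eqP].
Qed.

Lemma cyclic_outside_support y :
  cyclic_pos y -> ~~ (j <= y (lift ord_max k) < j + r)%N -> P y = 1.
Proof.
move=> /eqP ycyc yout; have := P_agrees (c := cellof y); rewrite ffunE => /(_ yout).
rewrite /HP; case: pickP => [v /eqP Pv | //] [vE].
by rewrite -(extend_cellof y) (_ : y ord_max = v) //; apply: val_inj; rewrite /= ycyc vE.
Qed.

Lemma support_cyclic_shift x : P x = 1 -> exists c, cyclic_shift k j r x c.
Proof.
move=> Px; rewrite /cyclic_shift.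
have [xin | xout] := boolP (j <= x (lift ord_max k) < j + r)%N; last first.
  by exists (x (lift ord_max k)); rewrite setk_id support_outside_cyclic ?eqxx.
have [c cyc] := exists_cyclic_setk k x; exists c; rewrite cyc /=.
apply/negPn/negP => cout.
have Py : P (setk k x c) = 1 by apply: cyclic_outside_support; rewrite ?setk_k.
have cE : c = x (lift ord_max k).
  by rewrite -{1}(setk_k k x c) (Lambda1_line_uniq P_Lambda1 (setk_line k x c) Px Py).
by rewrite cE xin in cout.
Qed.

End Support.

Section Counting.
Variables (p n : nat) (k : 'I_p) (j r : nat).
Variables (D : {set pos p.+1 n}) (c : pos p.+1 n -> 'I_n).
Hypotheses (diagD : is_diagonal D) (c_shift : forall x, x \in D -> cyclic_shift k j r x (c x)).

Let W : int := \sum_(x in D) ((c x)%:Z - (x (lift ord_max k))%:Z).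

Lemma shift_deviation_residue : (n%:Z %| (1 - p%:Z) * ('C(n, 2))%:Z - W)%Z.
Proof.
have cardD : #|D| = n by case/andP: diagD => /eqP.
have sum_coord i : (\sum_(x in D) x i = 'C(n, 2))%N.
  by rewrite (diag_big_coord diagD i (@nat_of_ord n)) -bin2_sum big_mkord.
have sum_csum : (\sum_(x in D) csum x = p * 'C(n, 2))%N.
  rewrite /csum exchange_big /= (eq_bigr (fun=> 'C(n, 2))) => [|i _]; last exact: sum_coord.
  by rewrite sum_nat_const card_ord.
have /dvdzP[q qE] : (n%:Z %| \sum_(x in D)
    ((x ord_max)%:Z - (csum x)%:Z - ((c x)%:Z - (x (lift ord_max k))%:Z) - p%:Z + 1))%Z.
  by apply: rpred_sum => x xD; have /andP[cyc _] := c_shift xD; exact: cyclic_setk_mod.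
move: qE; rewrite !big_split /= !sumrN !sumr_const cardD -/W -!Posz_sum sum_coord sum_csum.
rewrite -mulr_natr !natz => qE; apply/dvdzP; exists (q + p%:Z - 1); lia.
Qed.

Hypothesis window_le : (j + r <= n)%N.

Lemma shift_deviation_bound : ((absz W).*2 <= r * (r - 1))%N.
Proof.
set inW := fun x : pos p.+1 n => (j <= x (lift ord_max k) < j + r)%N.
have W_in : W = (\sum_(x in D | inW x) c x)%N%:Z - (\sum_(x in D | inW x) x (lift ord_max k))%N%:Z.
  rewrite !Posz_sum -sumrB /W (bigID inW) /=.
  rewrite [X in _ + X]big1 ?addr0 // => x /andP[xD xout].
  by have /andP[_] := c_shift xD; rewrite -/(inW x) (negbTE xout) => /eqP ->; rewrite subrr.
have sum_const m : (\sum_(x in D | inW x) m = r * m)%N.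
  rewrite (diag_big_coord_cond diagD (lift ord_max k) (fun y => j <= y < j + r)%N (fun=> m)).
  by rewrite big_ord_window // sum_nat_const_nat addKn.
have sum_xk : (\sum_(x in D | inW x) x (lift ord_max k) = r * j + 'C(r, 2))%N.
  rewrite (diag_big_coord_cond diagD (lift ord_max k) (fun y => j <= y < j + r)%N (@nat_of_ord n)).
  by rewrite (big_ord_window _ id) // sum_window_id.
have c_in x : x \in D -> inW x -> (j <= c x <= j + (r - 1))%N.
  by move=> xD xin; have /andP[_] := c_shift xD; rewrite -/(inW x) xin => /andP[]; lia.
have sum_c_lo : (r * j <= \sum_(x in D | inW x) c x)%N.
  by rewrite -sum_const; apply: leq_sum => x /andP[xD /(c_in x xD)/andP[]].
have sum_c_hi : (\sum_(x in D | inW x) c x <= r * j + r * (r - 1))%N.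
  by rewrite -mulnDr -sum_const; apply: leq_sum => x /andP[xD /(c_in x xD)/andP[]].
have := bin2_mul2 r; rewrite W_in sum_xk; lia.
Qed.

End Counting.

Lemma diagonal_not_cyclic_shift p n (k : 'I_p) j r (D : {set pos p.+1 n}) :
  ~~ odd n -> ~~ odd p -> (r * (r - 1) < n)%N -> (j + r <= n)%N -> is_diagonal D ->
  ~ (forall x, x \in D -> exists c, cyclic_shift k j r x c).
Proof.
move=> n_even p_even r_small window_le diagD shiftD.
have /fin_all_exists[c c_shift] : forall x, exists c, x \in D -> cyclic_shift k j r x c.
  move=> x; have [/shiftD[c cx] | _] := boolP (x \in D); first by exists c.
  by exists (x ord_max).
have := shift_deviation_bound diagD c_shift window_le.
have := bin2_residue_bound n_even p_even (shift_deviation_residue diagD c_shift).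
lia.
Qed.

Theorem theorem2p5 (R : realType) (n d r : nat) (k : 'I_d.-1) (j : nat)
  (hn : ~~ odd n) (hd3 : (3 <= d)%N) (hdodd : odd d)
  (hr : (0 < r)%N) (hrn : (r * (r - 1) < n)%N) (hj : (j + r <= n)%N) :
  (forall P : mat R d n, Lambda1 P -> agrees_outside k j r P -> Per P = 0) /\
  (forall (m : nat) (a : 'I_m -> R) (Ps : 'I_m -> mat R d n),
     (forall i, Lambda1 (Ps i)) -> (forall i, agrees_outside k j r (Ps i)) ->
     Per (fun x => \sum_(i < m) a i * Ps i x) = 0).
Proof.
case: d k hd3 hdodd => [//|p] k _ p_even.
have no_diag (D : {set pos p.+1 n}) :
    is_diagonal D -> ~ (forall x, x \in D -> exists c, cyclic_shift k j r x c).
  exact: diagonal_not_cyclic_shift hn p_even hrn hj.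
have supp P : Lambda1 P -> agrees_outside k j r P ->
    forall x, P x != 0 -> exists c, cyclic_shift k j r x c.
  move=> P_Lambda1 P_agrees x Px; apply: (support_cyclic_shift P_Lambda1 P_agrees).
  by case: (P_Lambda1.1 x) => // Px0; rewrite Px0 eqxx in Px.
split=> [P P_Lambda1 P_agrees | m a Ps Ps_Lambda1 Ps_agrees];
  apply: Per_eq0_of_support no_diag => x; first exact: supp.
move=> comb_x; have [i Psi_x] : exists i, Ps i x != 0.
  apply/existsP; apply: contraNT comb_x => /existsPn Ps_x0.
  by apply/eqP/big1 => i _; move/negPn/eqP: (Ps_x0 i) ->; rewrite mulr0.
exact: supp (Ps_Lambda1 i) (Ps_agrees i) x Psi_x.
Qed.
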